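(* Let $P_0=\mathrm{SO}(5)\times_{\phi_0}\mathrm{SO}(3)\cong V^{5,2}\times\mathrm{SO}(3)$ be the homogeneous $\mathrm{SO}(3)$-principal bundle over $V^{5,2}=\mathrm{SO}(5)/\mathrm{SO}(3)$ induced by the trivial homomorphism $\phi_0:\mathrm{SO}(3)\to\mathrm{SO}(3)$. The $\mathrm{SO}(5)$-invariant connections on $P_0$ are exactly those corresponding to linear maps $\alpha:\mathfrak{so}(5)\to\mathfrak{so}(3)$ of the form $$\alpha=e^1\otimes(b_8e_8+b_9e_9+b_{10}e_{10}),\qquad b_8,b_9,b_{10}\in\mathbb{R}.$$ Furthermore, the curvature $F_\alpha$ of such a connection lies in $\Omega^2_1(\mathfrak{so}(3))$, i.e. it is of the form $\omega\otimes v$ times a constant for a fixed $v\in\mathfrak{so}(3)$, where $\omega$ is the invariant 2-form corresponding to $e^{25}+e^{36}+e^{47}$.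
   Context: Basis of $\mathfrak{so}(5)$ (with $E_{ij}$ the elementary $5\times5$ matrices): $e_1=E_{12}-E_{21}$, $e_2=E_{13}-E_{31}$, $e_3=E_{14}-E_{41}$, $e_4=E_{15}-E_{51}$, $e_5=E_{23}-E_{32}$, $e_6=E_{24}-E_{42}$, $e_7=E_{25}-E_{52}$, $e_8=E_{34}-E_{43}$, $e_9=E_{35}-E_{53}$, $e_{10}=E_{54}-E_{45}$; bracket = commutator. $\mathrm{SO}(3)\subset\mathrm{SO}(5)$ has Lie algebra $\mathfrak{so}(3)=\mathrm{span}\{e_8,e_9,e_{10}\}$; the target group $\mathrm{SO}(3)$ is identified with this subgroup. $e^1,\dots,e^{10}$ is the dual basis of $\mathfrak{so}(5)^*$. For a homomorphism $\phi:H\to K$, $P=G\times_\phi K\to G/H$ is a homogeneous $K$-bundle, and $G$-invariant connections on $P$ correspond bijectively to linear maps $\alpha:\mathfrak g\to\mathfrak k$ with $\alpha|_{\mathfrak h}=\phi_*$ and $\alpha\circ\mathrm{Ad}(h)=\mathrm{Ad}(\phi(h))\circ\alpha$ for all $h\in H$ (Wang's theorem). The curvature of the connection is the invariant $\mathfrak k$-valued 2-form given on $\mathfrak m=\mathrm{span}\{e_1,\dots,e_7\}$ by $F(X,Y)=[\alpha X,\alpha Y]-\alpha([X,Y])$. $\Omega^2_1(\mathfrak{so}(3))$ denotes $\mathfrak{so}(3)$-valued 2-forms of the form $f\,\omega$ with $\omega=e^{25}+e^{36}+e^{47}$ (the transverse Kähler form line in the $\mathrm{SU}(3)$-decomposition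 $\Omega^2_1\oplus\Omega^2_6\oplus\Omega^2_8$ of transverse 2-forms). *)

From HB Require Import structures.
From mathcomp Require Import all_boot all_order all_algebra.
From mathcomp Require Import reals.
Set Implicit Arguments. Unset Strict Implicit. Unset Printing Implicit Defensive.
Import Order.TTheory GRing.Theory Num.Theory.
Local Open Scope ring_scope.

Section SO5.
Variable R : realType.

(* elementary matrix E_{ij}, with 1-based indices as in the paper *)
Definition Emx (i j : nat) : 'M[R]_5 := delta_mx (inord i.-1) (inord j.-1).

Definition eb (k : nat) : 'M[R]_5 :=
  match k with
  | 1 => Emx 1 2 - Emx 2 1
  | 2 => Emx 1 3 - Emx 3 1
  | 3 => Emx 1 4 - Emx 4 1
  | 4 => Emx 1 5 - Emx 5 1
  | 5 => Emx 2 3 - Emx 3 2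
  | 6 => Emx 2 4 - Emx 4 2
  | 7 => Emx 2 5 - Emx 5 2
  | 8 => Emx 3 4 - Emx 4 3
  | 9 => Emx 3 5 - Emx 5 3
  | 10 => Emx 5 4 - Emx 4 5
  | _ => 0
  end.

(* dual basis e^1, ..., e^10 (as linear functionals, read off the
   entry where the corresponding e_k has a +1) *)
Definition entry (X : 'M[R]_5) (i j : nat) : R := X (inord i.-1) (inord j.-1).
Definition ed (k : nat) (X : 'M[R]_5) : R :=
  match k with
  | 1 => entry X 1 2
  | 2 => entry X 1 3
  | 3 => entry X 1 4
  | 4 => entry X 1 5
  | 5 => entry X 2 3
  | 6 => entry X 2 4
  | 7 => entry X 2 5
  | 8 => entry X 3 4
  | 9 => entry X 3 5
  | 10 => entry X 5 4
  | _ => 0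
  end.

(* basis indexed by 'I_10 : index i stands for e_{i+1} *)
Definition ebo (i : 'I_10) := eb i.+1.
Definition edo (i : 'I_10) := ed i.+1.

Definition lbr (X Y : 'M[R]_5) : 'M[R]_5 := X *m Y - Y *m X.

Definition in_so5 (X : 'M[R]_5) : Prop :=
  exists c : 'I_10 -> R, X = \sum_(i < 10) c i *: ebo i.

Definition in_so3 (X : 'M[R]_5) : Prop :=
  exists b8 b9 b10 : R, X = b8 *: eb 8 + b9 *: eb 9 + b10 *: eb 10.

Definition in_m (X : 'M[R]_5) : Prop :=
  exists c : 'I_7 -> R, X = \sum_(i < 7) c i *: eb i.+1.

(* SO(3) as 3x3 special orthogonal matrices, embedded in SO(5) acting on
   the coordinates 3,4,5 (Lie algebra span{e8,e9,e10}) *)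
Definition in_SO3 (h : 'M[R]_3) : Prop := h^T *m h = 1%:M /\ \det h = 1.

Definition embSO3 (h : 'M[R]_3) : 'M[R]_5 :=
  \matrix_(i < 5, j < 5)
    if (i < 2)%N && (j < 2)%N then (i == j)%:R
    else if (2 <= i)%N && (2 <= j)%N then h (inord (i - 2)) (inord (j - 2))
    else 0.

Definition Ad (g X : 'M[R]_5) : 'M[R]_5 := g *m X *m invmx g.

Definition phi0 (h : 'M[R]_3) : 'M[R]_3 := 1%:M.
Definition dphi0 (X : 'M[R]_5) : 'M[R]_5 := 0.

(* the linear map alpha : so(5) -> so(3) determined by the images a i of
   the basis vectors e_{i+1}: alpha = sum_k e^k (x) a_k *)
Definition alpha_of (a : 'I_10 -> 'M[R]_5) (X : 'M[R]_5) : 'M[R]_5 :=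
  \sum_(i < 10) edo i X *: a i.

(* Wang's theorem conditions for phi = phi_0 *)
Definition wang_invariant (a : 'I_10 -> 'M[R]_5) : Prop :=
  (forall i, in_so3 (a i)) /\
  (forall X, in_so3 X -> alpha_of a X = dphi0 X) /\
  (forall h, in_SO3 h -> forall X, in_so5 X ->
     alpha_of a (Ad (embSO3 h) X) = Ad (embSO3 (phi0 h)) (alpha_of a X)).

Definition curv (a : 'I_10 -> 'M[R]_5) (X Y : 'M[R]_5) : 'M[R]_5 :=
  lbr (alpha_of a X) (alpha_of a Y) - alpha_of a (lbr X Y).

Definition wedge (i j : nat) (X Y : 'M[R]_5) : R := ed i X * ed j Y - ed j X * ed i Y.
Definition omega (X Y : 'M[R]_5) : R := wedge 2 5 X Y + wedge 3 6 X Y + wedge 4 7 X Y.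

End SO5.

From HB Require Import structures.
From mathcomp Require Import all_boot all_order all_algebra.
From mathcomp Require Import reals.
From mathcomp Require Import ring.
Import Order.TTheory GRing.Theory Num.Theory.
Local Open Scope ring_scope.

(** Since phi_0 is trivial, Wang's condition asks that alpha be invariant
    under Ad(SO(3)).  The half-turns of SO(3), i.e. the sign matrices
    diag(1,1,s3,s4,s5) with s3 s4 s5 = 1, act on each basis vector e_k by a
    sign, and every e_k with k >= 2 is negated by one of them; hence
    alpha(e_k) = -alpha(e_k) = 0.  Conversely e^1 reads the entry (1,2), which
    Ad(SO(3)) does not touch, so every e^1 (x) B is invariant.  For such alpha
    the bracket [alpha X, alpha Y] vanishes, and e^1([X,Y]) = -omega(X,Y) for
    all skew-symmetric X, Y, which gives F = omega (x) B. *)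

Lemma oppv_fixed0 (F : numFieldType) (V : lmodType F) (v : V) : - v = v -> v = 0.
Proof.
move=> Nv; have : 2%:R *: v = 0 by rewrite scaler_nat mulr2n -{1}Nv addNr.
by move/eqP; rewrite scaler_eq0 pnatr_eq0 => /eqP.
Qed.

Lemma mulmx_unit_col (F : pzSemiRingType) m n (A : 'M[F]_(m, n)) (B : 'M[F]_n) i j :
  (forall l, B l j = (l == j)%:R) -> (A *m B) i j = A i j.
Proof.
move=> Bj; rewrite mxE (bigD1 j) //= Bj eqxx mulr1 big1 ?addr0 // => l /negbTE lj.
by rewrite Bj lj mulr0.
Qed.

Lemma mulmx_unit_row (F : pzSemiRingType) m n (A : 'M[F]_m) (B : 'M[F]_(m, n)) i j :
  (forall l, A i l = (i == l)%:R) -> (A *m B) i j = B i j.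
Proof.
move=> Ai; rewrite mxE (bigD1 i) //= Ai eqxx mul1r big1 ?addr0 // => l /negbTE li.
by rewrite Ai eq_sym li mul0r.
Qed.

Lemma big_ord5 (V : nmodType) (F : 'I_5 -> V) :
  \sum_(i < 5) F i = F (inord 0) + F (inord 1) + F (inord 2) + F (inord 3) + F (inord 4).
Proof.
rewrite !big_ord_recl big_ord0 addr0 !addrA.
by congr (_ + _ + _ + _ + _); congr F; apply: val_inj; rewrite /= inordK.
Qed.

Lemma invmx_involutive (F : comUnitRingType) n (A : 'M[F]_n) : A *m A = 1%:M -> invmx A = A.
Proof.
move=> AA; have [uA _] := mulmx1_unit AA.
by rewrite -[invmx A]mulmx1 -AA mulmxA mulVmx // mul1mx.
Qed.

Lemma diag_mx_sign_sq (F : pzRingType) n (d : 'rV[F]_n) :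
  (forall l, d 0 l ^+ 2 = 1) -> diag_mx d *m diag_mx d = 1%:M.
Proof.
move=> d2; apply/matrixP => i j; rewrite mul_diag_mx !mxE.
by case: eqP => [->|_]; rewrite ?mulr0 // -expr2 d2.
Qed.

Lemma diag_mx_conj_delta (F : comPzRingType) n (d : 'rV[F]_n) i j :
  diag_mx d *m delta_mx i j *m diag_mx d = (d 0 i * d 0 j) *: delta_mx i j.
Proof.
apply/matrixP => p q; rewrite mul_mx_diag mul_diag_mx !mxE.
by case: eqP => [->|_]; case: eqP => [->|_]; rewrite ?mulr0 ?mul0r ?mulr1 1?mulrC.
Qed.

Section SO5.
Variable R : realType.
Implicit Types (a : 'I_10 -> 'M[R]_5) (h : 'M[R]_3) (X Y B : 'M[R]_5).

Definition eb_idx (k : nat) : nat * nat :=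
  match k with
  | 1 => (1, 2) | 2 => (1, 3) | 3 => (1, 4) | 4 => (1, 5) | 5 => (2, 3)
  | 6 => (2, 4) | 7 => (2, 5) | 8 => (3, 4) | 9 => (3, 5) | 10 => (5, 4)
  | _ => (0, 0)
  end.

Lemma ebE k : (0 < k <= 10)%N ->
  eb R k = Emx R (eb_idx k).1 (eb_idx k).2 - Emx R (eb_idx k).2 (eb_idx k).1.
Proof. by case: k => [|[|[|[|[|[|[|[|[|[|[|k]]]]]]]]]]]. Qed.

Lemma entry_Emx p q i j : (p < 5)%N -> (q < 5)%N -> (i < 5)%N -> (j < 5)%N ->
  entry (Emx R p.+1 q.+1) i.+1 j.+1 = ((i == p) && (j == q))%:R.
Proof. by move=> p5 q5 i5 j5; rewrite /entry /Emx mxE -!val_eqE /= !inordK. Qed.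

Lemma entryB X Y i j : entry (X - Y) i j = entry X i j - entry Y i j.
Proof. by rewrite /entry !mxE. Qed.

Lemma edE k X : (0 < k <= 10)%N -> ed k X = entry X (eb_idx k).1 (eb_idx k).2.
Proof. by case: k => [|[|[|[|[|[|[|[|[|[|[|k]]]]]]]]]]]. Qed.

Lemma ed_eb i j : (0 < i <= 10)%N -> (0 < j <= 10)%N -> ed i (eb R j) = (i == j)%:R.
Proof.
move=> hi hj; rewrite edE // ebE // entryB.
case: i hi => [|[|[|[|[|[|[|[|[|[|[|i]]]]]]]]]]] // _;
  case: j hj => [|[|[|[|[|[|[|[|[|[|[|j]]]]]]]]]]] // _;
  by rewrite !entry_Emx //= ?subrr ?subr0.
Qed.

Lemma edD k X Y : ed k (X + Y) = ed k X + ed k Y.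
Proof. by case: k => [|[|[|[|[|[|[|[|[|[|[|k]]]]]]]]]]]; rewrite /= ?addr0 // /entry mxE. Qed.

Lemma edZ k s X : ed k (s *: X) = s * ed k X.
Proof. by case: k => [|[|[|[|[|[|[|[|[|[|[|k]]]]]]]]]]]; rewrite /= ?mulr0 // /entry mxE. Qed.

Lemma so5_eb (k : 'I_10) : in_so5 (eb R k.+1).
Proof.
exists (fun i => (i == k)%:R).
by rewrite (bigD1 k) //= eqxx scale1r big1 ?addr0 // => i /negbTE ->; rewrite scale0r.
Qed.

Lemma alpha_ofZ a s X : alpha_of a (s *: X) = s *: alpha_of a X.
Proof.
by rewrite /alpha_of scaler_sumr; apply: eq_bigr => i _; rewrite /edo edZ scalerA.
Qed.

Lemma alpha_of_eb a (k : 'I_10) : alpha_of a (eb R k.+1) = a k.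
Proof.
rewrite /alpha_of (bigD1 k) // big1 => [|i /andP[_ ik]].
  by rewrite /edo ed_eb ?ltn_ord // eqxx scale1r; apply: addr0.
by rewrite /edo ed_eb ?ltn_ord // eqSS val_eqE (negbTE ik) scale0r.
Qed.

Lemma Ad_diag_sign_eb (d : 'rV[R]_5) k :
  (forall l, d 0 l ^+ 2 = 1) -> (0 < k <= 10)%N ->
  Ad (diag_mx d) (eb R k) =
    (d 0 (inord (eb_idx k).1.-1) * d 0 (inord (eb_idx k).2.-1)) *: eb R k.
Proof.
move=> d2 hk; rewrite /Ad invmx_involutive ?diag_mx_sign_sq // ebE // /Emx.
by rewrite mulmxBr mulmxBl !diag_mx_conj_delta [d 0 _ * _ in X in _ - X]mulrC scalerBr.
Qed.

Definition half_turn (i : 'I_3) : 'rV[R]_3 := \row_j (if j == i then 1 else -1).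

Lemma half_turn_sq i l : half_turn i 0 l ^+ 2 = 1.
Proof. by rewrite mxE; case: eqP; rewrite ?sqrrN expr1n. Qed.

Lemma in_SO3_half_turn i : in_SO3 (diag_mx (half_turn i)).
Proof.
split; first by rewrite tr_diag_mx diag_mx_sign_sq // => l; apply: half_turn_sq.
rewrite det_diag !big_ord_recl big_ord0 !mxE.
by case: i => [[|[|[|i]]] hi] //=; rewrite ?mulr1 ?mul1r ?mulrNN ?mulr1.
Qed.

Definition emb_diag (d : 'rV[R]_3) : 'rV[R]_5 :=
  \row_(j < 5) if (j < 2)%N then 1 else d 0 (inord (j - 2)).

Lemma embSO3_diag d : embSO3 (diag_mx d) = diag_mx (emb_diag d).
Proof.
apply/matrixP => i j; rewrite !mxE.
by case: i j => [[|[|[|[|[|i]]]]] hi] [[|[|[|[|[|j]]]]] hj] //=; rewrite -?val_eqE /= ?inordK.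
Qed.

Lemma emb_diag_half_turn i l : (l < 5)%N ->
  emb_diag (half_turn i) 0 (inord l) = if ((l < 2) || (l == i + 2))%N then 1 else -1.
Proof.
move=> l5; rewrite !mxE inordK //; case: ltnP => //= l2.
by rewrite -val_eqE /= inordK ?ltn_subLR // -(eqn_add2r 2) subnK.
Qed.

Lemma Ad_half_turn_eb k : (1 < k <= 10)%N ->
  exists i, Ad (embSO3 (diag_mx (half_turn i))) (eb R k) = - eb R k.
Proof.
move=> hk; have hk0 : (0 < k <= 10)%N by case/andP: hk => /ltnW -> ->.
suff [i sgn] : exists i, emb_diag (half_turn i) 0 (inord (eb_idx k).1.-1) *
                        emb_diag (half_turn i) 0 (inord (eb_idx k).2.-1) = -1.
  exists i; rewrite embSO3_diag Ad_diag_sign_eb ?sgn ?scaleN1r // => l.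
  by rewrite mxE; case: ifP; rewrite ?expr1n ?half_turn_sq.
case: k hk {hk0} => [|[|[|[|[|[|[|[|[|[|[|k]]]]]]]]]]] // _.
all: first [ by exists ord0; rewrite !emb_diag_half_turn //= ?mul1r ?mulr1
           | by exists ord_max; rewrite !emb_diag_half_turn //= ?mul1r ?mulr1 ].
Qed.

Lemma embSO3_1 : embSO3 (1%:M : 'M[R]_3) = 1%:M.
Proof.
apply/matrixP => i j; rewrite !mxE.
by case: i j => [[|[|[|[|[|i]]]]] hi] [[|[|[|[|[|j]]]]] hj] //=; rewrite -?val_eqE /= ?inordK.
Qed.

Lemma Ad_embSO3_phi0 h X : Ad (embSO3 (phi0 h)) X = X.
Proof. by rewrite /phi0 /Ad embSO3_1 invmx1 mulmx1 mul1mx. Qed.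

Lemma wang_invariant_eq0 a (k : 'I_10) : wang_invariant a -> k != ord0 -> a k = 0.
Proof.
case=> _ [_ equiv] k0.
have [i flip] : exists i, Ad (embSO3 (diag_mx (half_turn i))) (eb R k.+1) = - eb R k.+1.
  by apply: Ad_half_turn_eb; rewrite ltnS lt0n ltn_ord andbT.
have := equiv _ (in_SO3_half_turn i) _ (so5_eb k).
by rewrite Ad_embSO3_phi0 flip -scaleN1r alpha_ofZ alpha_of_eb scaleN1r => /oppv_fixed0.
Qed.

Lemma embSO3_col1 h l : embSO3 h l (inord 1) = (l == inord 1)%:R.
Proof. by rewrite mxE inordK //; case: l => [[|[|l]] hl] //=; rewrite -val_eqE /= inordK. Qed.

Lemma embSO3_row0 h l : embSO3 h (inord 0) l = (inord 0 == l)%:R.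
Proof. by rewrite mxE inordK //; case: l => [[|[|l]] hl] //=; rewrite -val_eqE /= inordK. Qed.

Lemma ed1_Ad_embSO3 h X : ed 1 (Ad (embSO3 h) X) = ed 1 X.
Proof.
rewrite /= /entry /Ad mulmx_unit_col => [|l].
  by rewrite mulmx_unit_row // => l; rewrite embSO3_row0.
(* The second column of [embSO3 h], hence of its inverse, is a unit vector;
   when [embSO3 h] is singular, [invmx] returns it unchanged. *)
have [uh | /negbTE nuh] := boolP (embSO3 h \in unitmx).
  have /matrixP/(_ l (inord 1)) := mulVmx uh.
  by rewrite mulmx_unit_col ?mxE // => m; rewrite embSO3_col1.
by rewrite invmx_out ?inE ?nuh // embSO3_col1.
Qed.

Lemma alpha_of_e1 a B : (forall i : 'I_10, a i = if i == 0%N :> nat then B else 0) ->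
  forall X, alpha_of a X = ed 1 X *: B.
Proof.
move=> aE X; rewrite /alpha_of (bigD1 ord0) // big1 => [|i /andP[_]].
  by rewrite aE /= addr0.
by rewrite aE -val_eqE /= => /negbTE ->; rewrite scaler0.
Qed.

Lemma wang_invariantE a :
  wang_invariant a <->
  exists b8 b9 b10 : R, forall i : 'I_10,
    a i = if i == 0%N :> nat then b8 *: eb R 8 + b9 *: eb R 9 + b10 *: eb R 10 else 0.
Proof.
split=> [W | [b8 [b9 [b10 aE]]]].
  have [b8 [b9 [b10 a0]]] := W.1 ord0.
  exists b8, b9, b10 => i; case: eqP => [i0 | /eqP i0].
    by rewrite (_ : i = ord0) //; apply: val_inj.
  by apply: wang_invariant_eq0 W _; rewrite -val_eqE.
split; [|split].
- move=> i; rewrite aE; case: ifP => _; first by exists b8, b9, b10.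
  by exists 0, 0, 0; rewrite !scale0r !addr0.
- move=> X [c8 [c9 [c10 ->]]].
  by rewrite (alpha_of_e1 _ _ aE) !edD !edZ !ed_eb // !mulr0 !addr0 scale0r.
- by move=> h _ X _; rewrite Ad_embSO3_phi0 !(alpha_of_e1 _ _ aE) ed1_Ad_embSO3.
Qed.

Lemma eb_skew k : (eb R k)^T = - eb R k.
Proof.
have [/andP[k0 k10] | ] := boolP (0 < k <= 10)%N.
  by rewrite ebE ?k0 // linearB /= /Emx !trmx_delta opprB.
by case: k => [|[|[|[|[|[|[|[|[|[|[|k]]]]]]]]]]] //= _; rewrite trmx0 oppr0.
Qed.

Lemma in_m_skew X : in_m X -> X^T = - X.
Proof.
case=> c ->; rewrite linear_sum -sumrN; apply: eq_bigr => i _.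
by move: (eb R i.+1) (eb_skew i.+1) => e te; rewrite linearZ /= te scalerN.
Qed.

Lemma ed1_lbr_skew X Y : X^T = - X -> Y^T = - Y -> ed 1 (lbr X Y) = - omega X Y.
Proof.
move=> /matrixP sX /matrixP sY.
have tX i j : X j i = - X i j by have := sX i j; rewrite !mxE.
have tY i j : Y j i = - Y i j by have := sY i j; rewrite !mxE.
have dX i : X i i = 0 by apply/eqP; rewrite -eqNr -tX.
have dY i : Y i i = 0 by apply/eqP; rewrite -eqNr -tY.
rewrite /omega /wedge /= /entry /lbr !mxE !big_ord5 /= !dX !dY.
rewrite (tX (inord 1) (inord 2)) (tX (inord 1) (inord 3)) (tX (inord 1) (inord 4)).
rewrite (tY (inord 1) (inord 2)) (tY (inord 1) (inord 3)) (tY (inord 1) (inord 4)).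
ring.
Qed.

Lemma lbr_scale B x y : lbr (x *: B) (y *: B) = 0.
Proof. by rewrite /lbr -!scalemxAl -!scalemxAr !scalerA mulrC subrr. Qed.

Lemma curv_e1 a B X Y : (forall i : 'I_10, a i = if i == 0%N :> nat then B else 0) ->
  in_m X -> in_m Y -> curv a X Y = omega X Y *: B.
Proof.
move=> aE mX mY; rewrite /curv !(alpha_of_e1 _ _ aE) lbr_scale sub0r.
by rewrite ed1_lbr_skew ?in_m_skew // scaleNr opprK.
Qed.

End SO5.

Theorem lemma4p4 (R : realType) :
  (forall a : 'I_10 -> 'M[R]_5,
     wang_invariant a <->
     exists b8 b9 b10 : R,
       forall i : 'I_10,
         a i = if (i == 0%N :> nat)
               then b8 *: eb R 8 + b9 *: eb R 9 + b10 *: eb R 10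
               else 0) /\
  (forall a : 'I_10 -> 'M[R]_5,
     wang_invariant a ->
     exists f : 'M[R]_5,
       in_so3 f /\
       forall X Y : 'M[R]_5, in_m X -> in_m Y ->
         curv a X Y = omega X Y *: f).
Proof.
split=> [|a /wang_invariantE [b8 [b9 [b10 aE]]]]; first exact: wang_invariantE.
exists (b8 *: eb R 8 + b9 *: eb R 9 + b10 *: eb R 10).
by split=> [|X Y]; [exists b8, b9, b10 | exact: curv_e1].
Qed.
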